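(* Assume the standing hypotheses below, and fix $n < \omega$. Let $X_n$ be a basis of the free group $G_n$, and let $\mathcal{B}_n$ be the family of all subgroups of $G_n$ generated by subsets of $X_n$. Then the collection $$\mathcal{B}'_n = \{ A \in \mathcal{B}_n : A + G_i \text{ is a pure subgroup of } G \text{ for every } i < \omega \}$$ is a $G(\aleph_0)$-family of the group $G_n$, all of whose members are pure subgroups of $G$.
   Context: Standing hypotheses: $G$ is a torsion-free abelian group and $0 = G_0 < G_1 < \dots < G_n < \dots$ ($n<\omega$) is an ascending chain of subgroups of $G$ such that every $G_n$ is free, every $G_n$ is a pure subgroup of $G$, and $G = \bigcup_{n<\omega} G_n$. A subgroup $H$ of an abelian group $G$ is pure if solubility in $G$ of every equation $nx = h$ with $n\in\mathbb{Z}$, $h\in H$ implies its solubility in $H$. A $G(\aleph_0)$-family of an abelian group $M$ is a collection $\mathcal{C}$ of subgroups of $M$ such that: (i) $0 \in \mathcal{C}$ and $M \in \mathcal{C}$; (ii) $\mathcal{C}$ is closed under unions of ascending chains; (iii) for every $A_0 \in \mathcal{C}$ and every countable subset $H \subseteq M$ there exists $A \in \mathcal{C}$ with $A_0 \cup H \subseteq A$ and $A/A_0$ countable. *)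

From HB Require Import structures.
From mathcomp Require Import all_boot all_order all_algebra.
Set Implicit Arguments. Unset Strict Implicit. Unset Printing Implicit Defensive.
Import Order.TTheory GRing.Theory Num.Theory.
Local Open Scope ring_scope.

Section Defs.
Variable G : zmodType.

Definition subset_of (A B : G -> Prop) : Prop := forall x, A x -> B x.

Definition torsion_free : Prop :=
  forall (m : nat) (x : G), (0 < m)%N -> x *+ m = 0 -> x = 0.

Definition is_subgroup (H : G -> Prop) : Prop :=
  H 0 /\ forall x y, H x -> H y -> H (x - y).

Definition pure_subgroup (H : G -> Prop) : Prop :=
  is_subgroup H /\
  forall (m : int) (h : G), H h -> (exists x : G, x *~ m = h) ->
    exists y, H y /\ y *~ m = h.

Definition gen (S : G -> Prop) : G -> Prop :=
  fun x => forall H, is_subgroup H -> subset_of S H -> H x.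

Definition independent (X : G -> Prop) : Prop :=
  forall (s : seq G) (c : G -> int), uniq s -> (forall x, x \in s -> X x) ->
    \sum_(x <- s) x *~ c x = 0 -> forall x, x \in s -> c x = 0.

Definition basis (X H : G -> Prop) : Prop :=
  subset_of X H /\ (forall x, H x <-> gen X x) /\ independent X.

Definition free_subgroup (H : G -> Prop) : Prop :=
  is_subgroup H /\ exists X, basis X H.

Definition sumg (A B : G -> Prop) : G -> Prop :=
  fun x => exists a b, A a /\ B b /\ x = a + b.

Definition countable_set (H : G -> Prop) : Prop :=
  exists f : nat -> G, forall h, H h -> exists k, f k = h.

(* A / A0 is countable: countably many cosets a + A0 (a in A) *)
Definition countable_quot (A A0 : G -> Prop) : Prop :=
  exists f : nat -> G, forall a, A a -> exists k, A0 (a - f k).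

Definition G_aleph0_family (C : (G -> Prop) -> Prop) (M : G -> Prop) : Prop :=
  (forall A, C A -> is_subgroup A /\ subset_of A M) /\
  C (fun x => x = 0) /\ C M /\
  (forall Ch : (G -> Prop) -> Prop,
     (exists A, Ch A) -> (forall A, Ch A -> C A) ->
     (forall A B, Ch A -> Ch B -> subset_of A B \/ subset_of B A) ->
     C (fun x => exists A, Ch A /\ A x)) /\
  (forall A0, C A0 -> forall H, subset_of H M -> countable_set H ->
     exists A, C A /\ subset_of A0 A /\ subset_of H A /\ countable_quot A A0).

Definition standing (Gc : nat -> G -> Prop) : Prop :=
  torsion_free /\
  (forall x, Gc 0%N x <-> x = 0) /\
  (forall n, subset_of (Gc n) (Gc n.+1) /\ exists x, Gc n.+1 x /\ ~ Gc n x) /\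
  (forall n, free_subgroup (Gc n)) /\
  (forall n, pure_subgroup (Gc n)) /\
  (forall x, exists n, Gc n x).

Definition Bfam (X : G -> Prop) (A : G -> Prop) : Prop :=
  exists Y, subset_of Y X /\ forall x, A x <-> gen Y x.

Definition Bfam' (Gc : nat -> G -> Prop) (X : G -> Prop) (A : G -> Prop) : Prop :=
  Bfam X A /\ forall i : nat, pure_subgroup (sumg A (Gc i)).

End Defs.

From HB Require Import structures.
From mathcomp Require Import all_boot all_order all_algebra.
From Stdlib Require Import ClassicalEpsilon.
Set Implicit Arguments. Unset Strict Implicit. Unset Printing Implicit Defensive.
Import GRing.Theory.
Local Open Scope ring_scope.

(* Members are pure because [A = A + G_0]; [0] and [G_n] are members because
   [A + G_i] collapses to [G_i] or [G_n]; a union of a chain is generated by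
   the basis elements it contains and inherits purity link by link.  The real
   work is axiom (iii): given [A0 = <Y0>] in [B'_n] and a countable [H ⊆ G_n],
   a Loewenheim-Skolem closure argument ([countable_closure]) produces a
   countable [Z ⊆ X] with [H ⊆ <Z>] such that whenever [t + c] is divisible by
   [m] in [G_n] ([t ∈ <Z>], [c ∈ A0 + G_i]), this is already witnessed inside
   [<Z>] for some [c' ∈ A0 + G_i].  Purity of [<Y0 ∪ Z> + G_i] then follows
   from the purity of [A0 + G_i] and [G_n] ([pure_sum_closed]). *)

Section Subgroups.
Variable G : zmodType.
Implicit Types (A B S T : G -> Prop) (x y : G).

Lemma subgroupN A x : is_subgroup A -> A x -> A (- x).
Proof. by move=> [A0 AB] Ax; rewrite -sub0r; apply: AB. Qed.

Lemma subgroupD A x y : is_subgroup A -> A x -> A y -> A (x + y).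
Proof. by move=> sA Ax Ay; rewrite -[y]opprK; apply: sA.2 => //; apply: subgroupN. Qed.

Lemma gen_incl S : subset_of S (gen S).
Proof. by move=> x Sx H _; apply. Qed.

Lemma gen_min S A : is_subgroup A -> subset_of S A -> subset_of (gen S) A.
Proof. by move=> sA SA x; apply. Qed.

Lemma gen_subgroup S : is_subgroup (gen S).
Proof.
split=> [H [] //|x y gx gy H sH SH].
exact: sH.2 (gx H sH SH) (gy H sH SH).
Qed.

Lemma gen_mono S T : subset_of S T -> subset_of (gen S) (gen T).
Proof. by move=> ST; apply: gen_min (gen_subgroup T) _ => x /ST /gen_incl. Qed.

Lemma sumg_subgroup A B : is_subgroup A -> is_subgroup B -> is_subgroup (sumg A B).
Proof.
move=> sA sB; split; first by exists 0, 0; rewrite addr0; split; [exact: sA.1|split; [exact: sB.1|]].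
move=> _ _ [a [b [Aa [Bb ->]]]] [a' [b' [Aa' [Bb' ->]]]].
by exists (a - a'), (b - b'); rewrite opprD addrACA; split; [exact: sA.2|split; [exact: sB.2|]].
Qed.

Lemma gen_union S T :
  subset_of (gen (fun x => S x \/ T x)) (sumg (gen S) (gen T)).
Proof.
apply: gen_min; first exact: sumg_subgroup (gen_subgroup S) (gen_subgroup T).
move=> z [Sz|Tz].
- by exists z, 0; rewrite addr0; split; [exact: gen_incl|split; [exact: (gen_subgroup T).1|]].
- by exists 0, z; rewrite add0r; split; [exact: (gen_subgroup S).1|split; [exact: gen_incl|]].
Qed.

Lemma gen_finite_support X x : gen X x ->
  exists l : seq G, (forall z, z \in l -> X z) /\ gen (fun z => z \in l) x.
Proof.
move: x; apply: gen_min; last first.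
  move=> z Xz; exists [:: z]; split; first by move=> w; rewrite mem_seq1 => /eqP ->.
  by apply: gen_incl; rewrite mem_seq1.
split; first by exists [::]; split => //; exact: (gen_subgroup _).1.
move=> a b [l1 [X1 g1]] [l2 [X2 g2]]; exists (l1 ++ l2); split.
  by move=> z; rewrite mem_cat => /orP [] ?; [apply: X1|apply: X2].
apply: (gen_subgroup _).2.
- by apply: gen_mono g1 => z zl; rewrite mem_cat zl.
- by apply: gen_mono g2 => z zl; rewrite mem_cat zl orbT.
Qed.

Lemma gen_increasing_union (Z : nat -> G -> Prop) x :
  (forall j j', (j <= j')%N -> subset_of (Z j) (Z j')) ->
  gen (fun z => exists j, Z j z) x -> exists j, gen (Z j) x.
Proof.
move=> Zmono; move: x; apply: gen_min; last by move=> z [j Zz]; exists j; exact: gen_incl.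
split; first by exists 0%N; exact: (gen_subgroup _).1.
move=> x y [j1 g1] [j2 g2]; exists (maxn j1 j2); apply: (gen_subgroup _).2.
- by apply: gen_mono g1; apply: Zmono; exact: leq_maxl.
- by apply: gen_mono g2; apply: Zmono; exact: leq_maxr.
Qed.

End Subgroups.

Lemma partial_choice (A B : Type) (b0 : B) (P : A -> Prop) (Q : A -> B -> Prop) :
  (forall a, P a -> exists b, Q a b) -> exists f : A -> B, forall a, P a -> Q a (f a).
Proof.
by move=> PQ; exists (fun a => epsilon (inhabits b0) (Q a)) => a /PQ; apply: epsilon_spec.
Qed.

(* Countable sets are handled as ranges of sequences [nat -> U]; the image
   of a function on a countable type is enumerated through [unpickle]. *)
Definition range (U : Type) (f : nat -> U) (u : U) : Prop := exists k, f k = u.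

Definition enum_of (T : countType) (U : Type) (t0 : T) (F : T -> U) (k : nat) : U :=
  F (odflt t0 (unpickle k)).

Lemma enum_ofP (T : countType) (U : Type) (t0 : T) (F : T -> U) u :
  range (enum_of t0 F) u <-> exists t, F t = u.
Proof.
split=> [[k <-]|[t <-]]; first by exists (odflt t0 (unpickle k)).
by exists (pickle t); rewrite /enum_of pickleK.
Qed.

Section CountableGeneration.
Variable G : zmodType.

Definition lincomb (e : nat -> G) (s : seq (nat * int)) : G :=
  \sum_(p <- s) e p.1 *~ p.2.

Definition span_enum (e : nat -> G) : nat -> G := enum_of [::] (lincomb e).

Lemma span_enum_gen (e : nat -> G) : subset_of (gen (range e)) (range (span_enum e)).
Proof.
apply: gen_min; last first.
  by move=> _ [k <-]; apply/enum_ofP; exists [:: (k, 1%:Z)]; rewrite /lincomb big_seq1.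
split; first by apply/enum_ofP; exists [::]; rewrite /lincomb big_nil.
move=> _ _ /enum_ofP [s1 <-] /enum_ofP [s2 <-]; apply/enum_ofP.
exists (s1 ++ [seq (p.1, - p.2) | p <- s2]).
by rewrite /lincomb big_cat big_map /= -sumrN; congr (_ + _); apply: eq_bigr => p _; rewrite mulrNz.
Qed.

Lemma gen_countable (S : G -> Prop) : countable_set S -> countable_set (gen S).
Proof.
move=> [e Se]; exists (span_enum e) => x gx; apply: span_enum_gen.
by apply: gen_mono gx => y /Se.
Qed.

End CountableGeneration.

(* Countable closure (a Loewenheim-Skolem argument inside [gen X]): given
   countably many "requests" [R t p] for each [t], starting from a countable
   set of supports we repeatedly add the finite [X]-supports of chosen
   witnesses for all requests about elements already generated. *)
Section CountableClosure.
Variables (G : zmodType) (X : G -> Prop) (I : countType) (R : G -> I -> G -> Prop).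
Variables (supp : G -> seq G) (wit : G -> I -> G) (e0 : nat -> G).
Hypothesis supp_spec : forall y, gen X y ->
  (forall z, z \in supp y -> X z) /\ gen (fun z => z \in supp y) y.
Hypothesis wit_spec : forall t p, (exists y, gen X y /\ R t p y) ->
  gen X (wit t p) /\ R t p (wit t p).

(* One round keeps [e] and adds the supports of the witnesses for all
   requests [(t, p)] with [t] generated by [e]; [closure_enum] enumerates the
   union of all rounds, and [closure_set] keeps its elements lying in [X]. *)
Definition closure_step (e : nat -> G) : nat -> G :=
  enum_of (inl 0%N) (fun v : nat + (nat * I * nat) =>
    match v with
    | inl k => e k
    | inr (a, p, q) => nth 0 (supp (wit (span_enum e a) p)) q
    end).

Definition closure_stage (j : nat) : nat -> G := iter j closure_step e0.

Definition closure_enum : nat -> G :=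
  enum_of (0%N, 0%N) (fun v : nat * nat => closure_stage v.1 v.2).

Definition closure_set (x : G) : Prop := X x /\ range closure_enum x.

Lemma closure_step_old e x : range e x -> range (closure_step e) x.
Proof. by move=> [k <-]; apply/enum_ofP; exists (inl k). Qed.

Lemma closure_step_new e t p z :
  range (span_enum e) t -> z \in supp (wit t p) -> range (closure_step e) z.
Proof.
move=> [a <-] zs; apply/enum_ofP.
by exists (inr (a, p, index z (supp (wit (span_enum e a) p)))); rewrite /= nth_index.
Qed.

Lemma closure_stage_mono j j' : (j <= j')%N ->
  subset_of (range (closure_stage j)) (range (closure_stage j')).
Proof.
move=> /subnKC <-; elim: (j' - j)%N => [|d IH] x; first by rewrite addn0.
by move=> /IH; rewrite addnS /closure_stage iterS; apply: closure_step_old.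
Qed.

Lemma closure_stage_enum j x : range (closure_stage j) x -> range closure_enum x.
Proof. by move=> [k <-]; apply/enum_ofP; exists (j, k). Qed.

Lemma supp_closure y : gen X y -> (forall z, z \in supp y -> range closure_enum z) ->
  gen closure_set y.
Proof.
move=> /supp_spec [suppX gy] supp_enum; apply: gen_mono gy => z zs.
by split; [apply: suppX|apply: supp_enum].
Qed.

Lemma closure_gen_stage t : gen closure_set t ->
  exists j, range (span_enum (closure_stage j)) t.
Proof.
move=> gt; have gU : gen (fun z => exists j, range (closure_stage j) z) t.
  by apply: gen_mono gt => _ [_ /enum_ofP [[j k] <-]]; exists j; exists k.
have [j gj] := gen_increasing_union closure_stage_mono gU.
by exists j; apply: span_enum_gen.
Qed.

Lemma closure_closed t p : gen closure_set t ->
  (exists y, gen X y /\ R t p y) -> exists y, gen closure_set y /\ R t p y.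
Proof.
move=> /closure_gen_stage [j tj] /wit_spec [gw Rw]; exists (wit t p); split => //.
apply: supp_closure gw _ => z zs; apply: (@closure_stage_enum j.+1).
by rewrite /closure_stage iterS; apply: closure_step_new zs.
Qed.

Lemma closure_initial y : gen X y -> (forall z, z \in supp y -> range e0 z) ->
  gen closure_set y.
Proof. by move=> gy supp0; apply: supp_closure gy _ => z /supp0; apply: (@closure_stage_enum 0). Qed.

End CountableClosure.

Lemma countable_closure (G : zmodType) (X : G -> Prop) (I : countType)
    (R : G -> I -> G -> Prop) (S : G -> Prop) :
  countable_set S -> subset_of S (gen X) ->
  exists Z, subset_of Z X /\ countable_set Z /\ subset_of S (gen Z) /\
    forall t p, gen Z t -> (exists y, gen X y /\ R t p y) -> exists y, gen Z y /\ R t p y.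
Proof.
move=> [f Sf] SX.
have [supp supp_spec] := partial_choice [::] (@gen_finite_support G X).
have [w w_spec] := partial_choice 0
  (Q := fun (tp : G * I) y => gen X y /\ R tp.1 tp.2 y) (fun _ ex => ex).
pose e0 := enum_of (0%N, 0%N) (fun v : nat * nat => nth 0 (supp (f v.1)) v.2).
exists (closure_set X supp (fun t p => w (t, p)) e0).
split; first by move=> x [].
split; first by exists (closure_enum supp (fun t p => w (t, p)) e0) => x [].
split; last exact: (@closure_closed _ _ _ _ _ _ e0 supp_spec (fun t p => w_spec (t, p))).
move=> _ /[dup] /Sf [k <-] /SX gy; apply: (@closure_initial _ _ _ _ (fun t p => w (t, p)) _ supp_spec _ gy) => z zs.
by apply/enum_ofP; exists (k, index z (supp (f k))); rewrite /= nth_index.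
Qed.

Section Purity.
Variable G : zmodType.
Implicit Types (A B M T : G -> Prop).

Lemma pure_ext A B : (forall x, A x <-> B x) -> pure_subgroup A -> pure_subgroup B.
Proof.
move=> AB [[A0 AD] Apure]; split; first split.
- exact/AB.
- by move=> x y /AB Ax /AB Ay; apply/AB; apply: AD.
move=> m h /AB Ah /(Apure m h Ah) [y [Ay ey]].
by exists y; split => //; apply/AB.
Qed.

Lemma sumg_idr A B : is_subgroup B -> A 0 -> subset_of A B ->
  forall x, sumg A B x <-> B x.
Proof.
move=> sB A0 AB x; split; last by move=> Bx; exists 0, x; rewrite add0r.
by move=> [a [b [Aa [Bb ->]]]]; apply: subgroupD => //; apply: AB.
Qed.

Lemma sumg_idl A B : is_subgroup A -> B 0 -> subset_of B A ->
  forall x, sumg A B x <-> A x.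
Proof.
move=> sA B0 BA x; split; last by move=> Ax; exists x, 0; rewrite addr0.
by move=> [a [b [Aa [Bb ->]]]]; apply: subgroupD => //; apply: BA.
Qed.

Lemma pure_sum_closed A0 B T M A :
  pure_subgroup M -> pure_subgroup (sumg A0 B) -> is_subgroup A -> is_subgroup B ->
  subset_of A0 A -> subset_of A (sumg A0 T) -> subset_of A M -> subset_of B M ->
  (forall t m, T t -> (exists y, M y /\ exists c, sumg A0 B c /\ t + c = y *~ m) ->
     exists y, A y /\ exists c, sumg A0 B c /\ t + c = y *~ m) ->
  pure_subgroup (sumg A B).
Proof.
move=> [sM pM] [sAB pAB] sA sB A0A AT AM BM closed.
split; first exact: sumg_subgroup.
move=> m _ [a [g [Aa [Bg ->]]]] [x ex].
have [a0 [t [A0a0 [Tt ea]]]] := AT a Aa.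
have cAB : sumg A0 B (a0 + g) by exists a0, g.
have eh : a + g = t + (a0 + g) by rewrite ea [a0 + t]addrC -addrA.
have Mh : M (a + g) by exact: subgroupD sM (AM a Aa) (BM g Bg).
have [y [My ey]] := pM m _ Mh (ex_intro _ x ex).
have [y' [Ay' [c' [c'AB e']]]] := closed t m Tt (ex_intro _ y (conj My
  (ex_intro _ (a0 + g) (conj cAB (esym (etrans ey eh)))))).
have dAB : sumg A0 B (a0 + g - c') := sAB.2 _ _ cAB c'AB.
have ed : (x - y') *~ m = a0 + g - c'.
  by rewrite mulrzBl ex eh -e' opprD addrACA subrr add0r.
have [z [[a1 [g1 [A0a1 [Bg1 ez]]]] ezm]] := pAB m _ dAB (ex_intro _ _ ed).
exists (y' + z); split.
  exists (y' + a1), g1; split; first exact: subgroupD sA Ay' (A0A _ A0a1).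
  by split => //; rewrite ez addrA.
by rewrite mulrzDl ezm -e' eh -addrA [c' + _]addrC subrK.
Qed.

End Purity.

Lemma chain_mono (G : zmodType) (Gc : nat -> G -> Prop) :
  (forall i, subset_of (Gc i) (Gc i.+1)) ->
  forall i j, (i <= j)%N -> subset_of (Gc i) (Gc j).
Proof.
move=> step i j /subnKC <-; elim: (j - i)%N => [|d IH] x; first by rewrite addn0.
by move=> /IH; rewrite addnS; apply: step.
Qed.

Lemma Bfam_subgroup (G : zmodType) (X A : G -> Prop) :
  Bfam X A -> is_subgroup A /\ subset_of A (gen X).
Proof.
move=> [Y [YX AY]]; split; last by move=> x /AY; apply: gen_mono.
split; first by apply/AY; exact: (gen_subgroup Y).1.
by move=> x y /AY gx /AY gy; apply/AY; apply: (gen_subgroup Y).2.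
Qed.

Section PureFamily.
Variables (G : zmodType) (Gc : nat -> G -> Prop) (n : nat) (X : G -> Prop).
Hypothesis Gc0 : forall x, Gc 0%N x <-> x = 0.
Hypothesis Gc_mono : forall i j, (i <= j)%N -> subset_of (Gc i) (Gc j).
Hypothesis Gc_pure : forall i, pure_subgroup (Gc i).
Hypothesis Gn_gen : forall x, Gc n x <-> gen X x.

Lemma Bfam'_sub A : Bfam' Gc X A -> is_subgroup A /\ subset_of A (Gc n).
Proof.
move=> [/Bfam_subgroup [sA AX] _]; split => // x /AX; exact: (proj2 (Gn_gen x)).
Qed.

(* Every member [A] of [B'_n] is pure, being [A + Gc 0]. *)
Lemma Bfam'_pure A : Bfam' Gc X A -> pure_subgroup A.
Proof.
move=> hA; have [sA _] := Bfam'_sub hA.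
apply: pure_ext (hA.2 0%N); apply: sumg_idl => // [|x /Gc0 ->]; first exact/Gc0.
exact: sA.1.
Qed.

Lemma sum_pure_sub A i : A 0 -> subset_of A (Gc i) -> pure_subgroup (sumg A (Gc i)).
Proof.
move=> A0 AGi; apply: pure_ext (Gc_pure i) => x.
by apply: iff_sym; apply: sumg_idr => //; exact: (Gc_pure i).1.
Qed.

Lemma Bfam'_zero : Bfam' Gc X (fun x => x = 0).
Proof.
split.
  exists (fun _ => False); split=> // x; split=> [->|]; first exact: (gen_subgroup _).1.
  by move=> gx; apply: (gx (fun x => x = 0)) => //; split=> // _ _ -> ->; rewrite subrr.
by move=> i; apply: sum_pure_sub => // _ ->; exact: (Gc_pure i).1.1.
Qed.

Lemma Bfam'_full : Bfam' Gc X (Gc n).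
Proof.
split; first by exists X; split.
move=> i; case: (leqP i n) => [le_in|/ltnW le_ni].
- apply: pure_ext (Gc_pure n) => x; apply: iff_sym; apply: sumg_idl.
  + exact: (Gc_pure n).1.
  + exact: (Gc_pure i).1.1.
  + exact: Gc_mono.
- by apply: sum_pure_sub (Gc_mono le_ni); exact: (Gc_pure n).1.1.
Qed.

(* The union of a nonempty chain in [B'_n] belongs to [B'_n]: it is generated
   by the basis elements it contains, and purity is checked in a single link. *)
Lemma Bfam'_chain (Ch : (G -> Prop) -> Prop) :
  (exists A, Ch A) -> (forall A, Ch A -> Bfam' Gc X A) ->
  (forall A B, Ch A -> Ch B -> subset_of A B \/ subset_of B A) ->
  Bfam' Gc X (fun x => exists A, Ch A /\ A x).
Proof.
move=> [A0 ChA0] ChB' chain; set U := fun x => exists A, Ch A /\ A x.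
have sub A : Ch A -> is_subgroup A by move=> /ChB' /Bfam'_sub [].
have sU : is_subgroup U.
  split; first by exists A0; split => //; exact: (sub A0 ChA0).1.
  move=> x y [A [ChA Ax]] [B [ChB By]].
  case: (chain A B ChA ChB) => [AB|BA].
  + by exists B; split => //; apply: (sub B ChB).2 => //; exact: AB.
  + by exists A; split => //; apply: (sub A ChA).2 => //; exact: BA.
split.
  exists (fun x => X x /\ U x); split=> [x []//|x]; split; last first.
    by move=> gx; apply: (gen_min sU _ gx) => z [].
  move=> [A [ChA Ax]]; have [[Y [YX AY]] _] := ChB' A ChA.
  apply: gen_mono (proj1 (AY x) Ax) => z Yz; split; first exact: YX.
  by exists A; split => //; apply/AY; exact: gen_incl.
move=> i; split; first exact: sumg_subgroup sU (Gc_pure i).1.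
move=> m _ [u [g [[A [ChA Au]] [Gg ->]]]] ex.
have [y [[a [b [Aa [Gb e]]]] ey]] := ((ChB' A ChA).2 i).2 m (u + g)
  (ex_intro _ u (ex_intro _ g (conj Au (conj Gg erefl)))) ex.
by exists y; split => //; exists a, b; split => //; exists A.
Qed.

(* Axiom (iii) of a G(aleph_0)-family: [A0 ∈ B'_n] and a countable [H ⊆ Gc n]
   lie in some [A ∈ B'_n] with [A / A0] countable.  [A] is generated by [A0]'s
   basis elements together with a countable [Z ⊆ X], closed under realising
   divisibility of elements [t + c] ([c ∈ A0 + Gc i]) within [gen Z]. *)
Lemma Bfam'_extend A0 H : Bfam' Gc X A0 -> subset_of H (Gc n) -> countable_set H ->
  exists A, Bfam' Gc X A /\ subset_of A0 A /\ subset_of H A /\ countable_quot A A0.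
Proof.
move=> [[Y0 [Y0X A0Y]] A0pure] HGn cH.
pose R t (p : int * nat) y := exists c, sumg A0 (Gc p.2) c /\ t + c = y *~ p.1.
have [Z [ZX [cZ [HZ Zclosed]]]] :=
  countable_closure R cH (fun h Hh => proj1 (Gn_gen h) (HGn h Hh)).
pose A := gen (fun x => Y0 x \/ Z x).
have A0A : subset_of A0 A by move=> x /A0Y; apply: gen_mono => z; left.
have ZA : subset_of (gen Z) A by apply: gen_mono => z; right.
have A_sum : subset_of A (sumg A0 (gen Z)).
  move=> x /gen_union [a [t [ga [gt ->]]]]; exists a, t; split => //; exact/A0Y.
have AGn : subset_of A (Gc n).
  by move=> x gx; apply/Gn_gen; apply: gen_mono gx => z [/Y0X|/ZX].
exists A; split; last split=> //; last split.
- split; first by exists (fun x => Y0 x \/ Z x); split => // x [/Y0X|/ZX].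
  move=> i; case: (leqP i n) => [le_in|/ltnW le_ni]; last first.
    by apply: sum_pure_sub (fun x Ax => Gc_mono le_ni (AGn x Ax)); exact: (gen_subgroup _).1.
  apply: pure_sum_closed (Gc_pure n) (A0pure i) (gen_subgroup _) (Gc_pure i).1
    A0A A_sum AGn (Gc_mono le_in) _ => t m gt [y [Gy ex]].
  have [y' [Zy' Ry']] := Zclosed t (m, i) gt (ex_intro _ y (conj (proj1 (Gn_gen y) Gy) ex)).
  by exists y'; split; [exact: ZA|].
- by move=> h /HZ; exact: ZA.
- have [f Zf] := gen_countable cZ; exists f => _ /A_sum [a [t [A0a [/Zf [k <-] ->]]]].
  by exists k; rewrite addrK.
Qed.

End PureFamily.

Theorem lemma2 (G : zmodType) (Gc : nat -> G -> Prop) (n : nat) (X : G -> Prop) :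
  standing Gc -> basis X (Gc n) ->
  G_aleph0_family (Bfam' Gc X) (Gc n) /\
  (forall A, Bfam' Gc X A -> pure_subgroup A).
Proof.
move=> [_ [Gc0 [chain [_ [Gc_pure _]]]]] [_ [Gn_gen _]].
have Gc_mono := chain_mono (fun i => (chain i).1).
split; last exact: Bfam'_pure Gc0 Gn_gen.
split; first exact: Bfam'_sub Gn_gen.
split; first exact: Bfam'_zero.
split; first exact: Bfam'_full.
split; first exact: Bfam'_chain.
by move=> A0 /Bfam'_extend; apply.
Qed.
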